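(* Let $s,t$ be real numbers. For every integer $n \geq 3$, $$\det W_n = \Big\lfloor \frac{n-1}{2}\Big\rfloor (-s)^{n-3}t^3 - s\det W_{n-1}.$$
   Context: All matrices below are $n\times n$ upper Hessenberg with subdiagonal entries $a_{i+1,i}=s$ and $a_{ij}=0$ for $i>j+1$; only the entries $a_{ij}$ with $i\le j$ are specified. For $n = 2k+1$ ($k\ge 1$), $W_n$ has: $a_{1j}=t$ for $1\le j\le k$, $a_{1j}=0$ for $k+1\le j\le 2k$, $a_{1n}=t$; for $2\le i\le k+1$: $a_{ij}=0$ for $i\le j\le k$, $a_{ij}=t$ for $k+1\le j\le 2k$, $a_{in}=0$; for $k+2\le i\le n$: $a_{ij}=0$ for $i\le j\le 2k$, $a_{in}=t$. For $n=2k+2$ ($k\ge 0$), $W_n$ has: $a_{1j}=t$ for $1\le j\le k$, $a_{1j}=0$ for $k+1\le j\le 2k+1$, $a_{1n}=t$; for $2\le i\le k+1$: $a_{ij}=0$ for $i\le j\le k$, $a_{ij}=t$ for $k+1\le j\le 2k+1$, $a_{in}=0$; for $k+2\le i\le n$: $a_{ij}=0$ for $i\le j\le 2k+1$, $a_{in}=t$. *)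

From mathcomp Require Import all_boot all_order all_algebra.
From mathcomp Require Import reals.
Set Implicit Arguments. Unset Strict Implicit. Unset Printing Implicit Defensive.
Import Order.TTheory GRing.Theory Num.Theory.
Local Open Scope ring_scope.

(* Entry a_{ij} of W_n, with 1-based indices i, j in {1..n}.
   k = floor((n-1)/2): for n = 2k+1 and for n = 2k+2 alike. *)
Definition W_entry (R : ringType) (s t : R) (n i j : nat) : R :=
  let k := (n.-1)./2 in
  if (j.+1 < i)%N then 0
  else if i == j.+1 then s
  else
    if i == 1%N then (if (j <= k)%N then t else if j == n then t else 0)
    else if (i <= k.+1)%N then
      (if j == n then 0 else if (j <= k)%N then 0 else t)
    else (if j == n then t else 0).

Definition W (R : ringType) (s t : R) (n : nat) : 'M[R]_n :=
  \matrix_(i < n, j < n) W_entry s t n i.+1 j.+1.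

From mathcomp Require Import all_boot all_order all_algebra.
From mathcomp Require Import reals ring zify.

Set Implicit Arguments.
Unset Strict Implicit.
Unset Printing Implicit Defensive.

Import Order.TTheory GRing.Theory Num.Theory.
Local Open Scope ring_scope.

(* W_n is upper Hessenberg with constant subdiagonal s, so expanding along the
   last column expresses each leading principal minor through the smaller ones:
   det H_(m+1) = sum_a (-s)^(m-a) h_(a,m) det H_a.  The block pattern of W_n
   makes these minors explicit: with k = floor((n-1)/2) they are (-s)^(j-1) t
   for 1 <= j <= k and k t^2 (-s)^(j-2) for k < j < n, whence
   det W_n = (-s)^(n-1) t + floor((n-1)/2) ceil((n-1)/2) t^3 (-s)^(n-3).
   The recurrence then reduces to
   floor(m/2) ceil(m/2) - floor((m-1)/2) ceil((m-1)/2) = floor(m/2). *)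

Section Hessenberg.
Variables (R : comPzRingType) (g : nat -> nat -> R) (s : R).
Hypothesis g_below_subdiag : forall i j, (j.+1 < i)%N -> g i j = 0.
Hypothesis g_subdiag : forall j, g j.+1 j = s.

Definition hess m : 'M[R]_m := \matrix_(i < m, j < m) g i j.

(* Deleting row [a] and the last column of [hess m.+1] leaves a block upper
   triangular matrix with diagonal blocks [hess a] and an upper triangular
   block whose diagonal is the subdiagonal [s]. *)
Lemma det_hess_row' a m : (a <= m)%N ->
  \det (\matrix_(i < m, j < m) g (bump a i) j) = s ^+ (m - a) * \det (hess a).
Proof.
elim: m => [|m IHm] le_am.
  have -> : a = 0%N by lia.
  by rewrite !det_mx00 mul1r.
have [->|ne_am] := eqVneq a m.+1.
  rewrite subnn mul1r; congr (\det _); apply/matrixP => i j.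
  by rewrite !mxE /bump leqNgt ltn_ord.
have le_am' : (a <= m)%N by lia.
rewrite (expand_det_row _ ord_max) big_ord_recr /= big1 => [|j _]; last first.
  by rewrite mxE g_below_subdiag ?mul0r //= /bump; have := ltn_ord j; lia.
rewrite add0r mxE /cofactor /bump /= le_am' add1n g_subdiag.
rewrite -signr_odd addnn odd_double mul1r.
have -> : row' ord_max (col' ord_max (\matrix_(i < m.+1, j < m.+1) g (bump a i) j))
          = \matrix_(i < m, j < m) g (bump a i) j.
  apply/matrixP => i j; rewrite !mxE /=.
  by rewrite [bump m i]/bump [bump m j]/bump leqNgt ltn_ord leqNgt ltn_ord.
by rewrite IHm // subSn // exprS mulrA.
Qed.

Lemma det_hess_expand m : \det (hess m.+1) =
  \sum_(0 <= a < m.+1) (-s) ^+ (m - a) * g a m * \det (hess a).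
Proof.
rewrite big_mkord (expand_det_col _ ord_max); apply: eq_bigr => a _.
rewrite mxE /cofactor.
have le_am : (a <= m)%N by have := ltn_ord a; lia.
have -> : row' a (col' ord_max (hess m.+1)) = \matrix_(i < m, j < m) g (bump a i) j.
  by apply/matrixP => i j; rewrite !mxE /= [bump m j]/bump leqNgt ltn_ord.
have -> : (-1) ^+ (a + @ord_max m) = (-1) ^+ (m - a) :> R.
  by rewrite -signr_odd -[RHS]signr_odd oddD oddB // addbC.
by rewrite det_hess_row' // [(- s) ^+ _]exprNn /=; ring.
Qed.

End Hessenberg.

Lemma subn_half m : (m - m./2)%N = uphalf m.
Proof. by have := odd_double_half m; have := uphalf_half m; lia. Qed.

Lemma mul_half_uphalfS m :
  ((m.+1)./2 * uphalf m.+1 = (m.+1)./2 + m./2 * uphalf m)%N.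
Proof. by rewrite /= mulnS mulnC. Qed.

Definition W_coef (R : nzRingType) (s t : R) (n i j : nat) : R :=
  W_entry s t n i.+1 j.+1.

Section LeadingMinorsW.
Variables (R : comNzRingType) (s t : R) (m : nat).
Local Notation k := m./2.
Local Notation w := (W_coef s t m.+1).

Local Ltac W_cases :=
  have := odd_double_half m;
  rewrite /W_coef /W_entry /=; repeat (case: ifP => ?); by [|lia].

Lemma W_below_subdiag i j : (j.+1 < i)%N -> w i j = 0.
Proof. W_cases. Qed.
Lemma W_subdiag j : w j.+1 j = s.
Proof. W_cases. Qed.

Lemma W_head_left j : (j < k)%N -> w 0%N j = t.
Proof. W_cases. Qed.
Lemma W_head_mid j : (k <= j)%N -> (j < m)%N -> w 0%N j = 0.
Proof. W_cases. Qed.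
Lemma W_head_last : w 0%N m = t.
Proof. W_cases. Qed.
Lemma W_body_left a j : (0 < a)%N -> (a <= j)%N -> (j < k)%N -> w a j = 0.
Proof. W_cases. Qed.
Lemma W_body_mid a j :
  (0 < a)%N -> (a <= k)%N -> (k <= j)%N -> (j < m)%N -> w a j = t.
Proof. W_cases. Qed.
Lemma W_body_last a : (0 < a)%N -> (a <= k)%N -> w a m = 0.
Proof. W_cases. Qed.
Lemma W_tail_mid a j : (k < a)%N -> (a <= j)%N -> (j < m)%N -> w a j = 0.
Proof. W_cases. Qed.
Lemma W_tail_last a : (k < a)%N -> (a <= m)%N -> w a m = t.
Proof. W_cases. Qed.

Local Notation D j := (\det (hess w j)).
Local Notation det_expand := (det_hess_expand W_below_subdiag W_subdiag).

Lemma det_W_minor_head j : (0 < j <= k)%N -> D j = (-s) ^+ j.-1 * t.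
Proof.
case: j => [//|j] /andP[_ lt_jk].
rewrite det_expand big_ltn // big_nat_cond big1 ?addr0
  => [|a /andP[/andP[a_gt0 le_aj] _]].
  by rewrite W_head_left // det_mx00 mulr1 subn0.
by rewrite (W_body_left a_gt0 le_aj lt_jk) mulr0 mul0r.
Qed.

Lemma det_W_minor_mid j :
  (k < j <= m)%N -> D j = k%:R * t ^+ 2 * (-s) ^+ (j - 2).
Proof.
case: j => [//|j] /andP[le_kj lt_jm].
rewrite det_expand big_ltn // (big_cat_nat _ (n := k.+1)) //=.
rewrite (W_head_mid le_kj lt_jm) mulr0 mul0r add0r.
rewrite (eq_big_nat _ _ (F2 := fun=> t ^+ 2 * (-s) ^+ j.-1))
  => [|a /andP[a_gt0 le_ak]]; last first.
  rewrite (W_body_mid a_gt0 le_ak le_kj lt_jm) det_W_minor_head ?a_gt0 //.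
  have -> : j.-1 = (j - a + a.-1)%N by lia.
  by rewrite exprD; ring.
rewrite sumr_const_nat (eq_big_nat _ _ (F2 := fun=> 0))
  => [|a /andP[lt_ka le_aj]]; last first.
  by rewrite (W_tail_mid lt_ka le_aj lt_jm) mulr0 mul0r.
rewrite sumr_const_nat mul0rn addr0 subn1 -mulr_natl.
have -> : (j.+1 - 2 = j.-1)%N by lia.
ring.
Qed.

Lemma det_W_closed : \det (W s t m.+1) =
  (-s) ^+ m * t + (m./2 * uphalf m)%:R * t ^+ 3 * (-s) ^+ (m - 2).
Proof.
have le_km : (k <= m)%N by have := odd_double_half m; lia.
rewrite [W _ _ _]/(hess w m.+1) det_expand big_ltn //.
rewrite (big_cat_nat _ (n := k.+1)) //= W_head_last det_mx00 mulr1 subn0.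
rewrite (eq_big_nat _ _ (F2 := fun=> 0)) => [|a /andP[a_gt0 le_ak]]; last first.
  by rewrite (W_body_last a_gt0 le_ak) mulr0 mul0r.
rewrite sumr_const_nat (eq_big_nat _ _ (F2 := fun=> k%:R * t ^+ 3 * (-s) ^+ (m - 2)))
  => [|a /andP[lt_ka le_am]]; last first.
  rewrite (W_tail_last lt_ka le_am) det_W_minor_mid ?lt_ka //.
  (* [a - 2] truncates only for [a = 1], which forces [k = 0]. *)
  have [-> | k_gt0] := posnP k; first by rewrite !mul0r mulr0.
  have -> : (m - 2 = m - a + (a - 2))%N by lia.
  by rewrite exprD; ring.
rewrite sumr_const_nat mul0rn add0r subSS subn_half natrM -mulr_natl.
ring.
Qed.

End LeadingMinorsW.

Theorem proposition5p4 (R : realType) (s t : R) (n : nat) :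
  (3 <= n)%N ->
  \det (W s t n) =
    ((n.-1)./2)%:R * (- s) ^+ (n - 3) * t ^+ 3 - s * \det (W s t n.-1).
Proof.
case: n => [|[|[|p]]] // _; rewrite [p.+3.-1]/= !det_W_closed.
rewrite mul_half_uphalfS natrD !subSS subn0 subn1.
by case: p => [|p] /=; rewrite ?exprS; ring.
Qed.
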